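(* Let $(b_1,\ldots,b_m,\alpha,\beta,\gamma)$ be a reduced Schubert problem with $\alpha\le\beta\le\gamma$ and $\alpha<\gamma$. Then $K(b_1,\ldots,b_m,\alpha,\beta+\gamma) < K(b_1,\ldots,b_m,\gamma,\beta+\alpha)$.
   Context: A Schubert problem is a finite list $a_\bullet=(a_1,\ldots,a_k)$ of positive integers with even sum; set $n(a_\bullet)=\frac12(a_1+\cdots+a_k+2)$. It is valid if $a_i\le n(a_\bullet)-1$ for all $i$, and reduced if it is valid and $a_i+a_j\le n(a_\bullet)-1$ for all $i<j$. For such a list, $K(a_\bullet)$ is the number of Young tableaux of shape $(n(a_\bullet)-1,n(a_\bullet)-1)$ and content $(a_1,\ldots,a_k)$: two-rowed arrays of integers, each row of length $n(a_\bullet)-1$, weakly increasing along rows, strictly increasing down columns, with exactly $a_i$ occurrences of $i$ for each $i$. *)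

From mathcomp Require Import all_boot.
Set Implicit Arguments. Unset Strict Implicit. Unset Printing Implicit Defensive.

Definition nS (a : seq nat) : nat := (sumn a + 2)./2.

Definition schubert (a : seq nat) : bool :=
  all (fun x => 0 < x) a && ~~ odd (sumn a).

Definition valid (a : seq nat) : bool :=
  schubert a && all (fun x => x <= nS a - 1) a.

Definition reduced (a : seq nat) : bool :=
  valid a &&
  [forall i : 'I_(size a), forall j : 'I_(size a),
     (i < j) ==> (nth 0 a i + nth 0 a j <= nS a - 1)].

(* A two-rowed array, each row of length nS a - 1, with entries in
   {1,...,size a}; the entry value i+1 is encoded by (i : 'I_(size a)). *)
Definition tabT (a : seq nat) : finType :=
  ({ffun 'I_(nS a - 1) -> 'I_(size a)} * {ffun 'I_(nS a - 1) -> 'I_(size a)})%type.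

Definition is_tableau (a : seq nat) (t : tabT a) : bool :=
  [forall j1 : 'I_(nS a - 1), forall j2 : 'I_(nS a - 1),
     (j1 <= j2) ==> ((t.1 j1 <= t.1 j2) && (t.2 j1 <= t.2 j2))] &&
  [forall j : 'I_(nS a - 1), t.1 j < t.2 j] &&
  [forall i : 'I_(size a),
     #|[set j | t.1 j == i]| + #|[set j | t.2 j == i]| == nth 0 a i].

Definition K (a : seq nat) : nat := #|[set t : tabT a | is_tableau t]|.

From mathcomp Require Import all_boot zify.
Set Implicit Arguments. Unset Strict Implicit. Unset Printing Implicit Defensive.

(* Let N = n - 1 be the row length and m the length of b; letters are numbered
   from 0, so the two largest letters are m and m + 1. In a tableau of content
   (b, alpha, beta + gamma) the letter m + 1 fills exactly the last beta + gamma
   cells of the second row, and the first row has at most alpha letters m, all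
   among its last alpha cells. Lowering the letters m + 1 of the columns
   N - beta - gamma, ..., N - beta - alpha - 1 to m therefore gives, injectively,
   a tableau of content (b, gamma, beta + alpha). The map is not onto: cut the
   sorted word of b after N - alpha - 1 letters, complete the first row by
   alpha + 1 letters m and the second by letters m and then beta + alpha letters
   m + 1; reducedness (b_i + gamma <= N, so b_i < N - alpha) keeps the columns
   strict, and no image has alpha + 1 letters m in its first row. *)

Lemma card_ord_pred N (p : pred nat) : #|[set j : 'I_N | p j]| = count p (iota 0 N).
Proof.
rewrite cardE -val_enum_ord count_map /enum_mem -enumT size_filter filter_predT.
by apply: eq_count => j; rewrite /= inE.
Qed.

Lemma card_ord_range N lo hi : #|[set j : 'I_N | lo <= j < hi]| = minn hi N - lo.
Proof.
rewrite (card_ord_pred N (fun j => lo <= j < hi)).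
elim: N => [|N IH]; first by rewrite minn0.
by rewrite -addn1 iotaD count_cat IH /=; case: (boolP (lo <= N < hi)); lia.
Qed.

Lemma nth_cat_nseq (s : seq nat) n x j :
  nth 0 (s ++ nseq n x) j =
  if j < size s then nth 0 s j else if j < size s + n then x else 0.
Proof. by rewrite nth_cat nth_nseq; case: ltnP => // le_s_j; rewrite ltn_subLR. Qed.

Lemma sorted_cat_nseq (s : seq nat) n x :
  sorted leq s -> all (leq^~ x) s -> sorted leq (s ++ nseq n x).
Proof.
rewrite !(sorted_pairwise leq_trans) pairwise_cat => -> sx; apply/andP; split=> //.
  by apply/allrelP => y z /(allP sx) yx /nseqP[-> _].
by elim: n => //= n ->; rewrite andbT; apply/allP => z /nseqP[-> _].
Qed.

Lemma sorted_gap (s : seq nat) P j : sorted leq s -> j + P < size s ->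
  (forall v, count_mem v s <= P) -> nth 0 s j < nth 0 s (j + P).
Proof.
move=> s_sorted jP_lt count_le.
have s_homo := sorted_leq_nth leq_trans leqnn 0 s_sorted.
have le_jP : nth 0 s j <= nth 0 s (j + P) by apply: s_homo; rewrite ?inE; lia.
rewrite ltn_neqAle le_jP andbT; apply/negP => /eqP eq_jP.
set v := nth 0 s j in eq_jP.
suff : P.+1 <= count_mem v s by have := count_le v; lia.
have -> : s = take j s ++ take P.+1 (drop j s) ++ drop P.+1 (drop j s).
  by rewrite !cat_take_drop.
have size_win : size (take P.+1 (drop j s)) = P.+1.
  by rewrite size_take size_drop; case: ifP; lia.
rewrite !count_cat (_ : count_mem v (take P.+1 (drop j s)) = P.+1); first lia.
rewrite -{2}size_win; apply/eqP; rewrite -all_count.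
apply/(all_nthP 0) => i; rewrite size_win => i_lt.
rewrite nth_take // nth_drop; apply/eqP/anti_leq.
by apply/andP; split; [rewrite eq_jP|]; apply: s_homo; rewrite ?inE; lia.
Qed.

Fixpoint word_from (o : nat) (b : seq nat) : seq nat :=
  if b is x :: b' then nseq x o ++ word_from o.+1 b' else [::].

Lemma size_word_from o b : size (word_from o b) = sumn b.
Proof. by elim: b o => //= x b IH o; rewrite size_cat size_nseq IH. Qed.

Lemma word_from_bounds o b : all (fun v => o <= v < o + size b) (word_from o b).
Proof.
elim: b o => //= x b IH o; rewrite all_cat; apply/andP; split.
  by apply/allP => v /nseqP [-> _]; lia.
by apply: sub_all (IH o.+1) => v /andP [h1 h2]; lia.
Qed.

Lemma path_word_from o b : path leq o (word_from o b).
Proof.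
elim: b o => //= x b IH o; rewrite cat_path; apply/andP; split.
  by elim: x => //= x ->; rewrite leqnn.
have -> : last o (nseq x o) = o by elim: x.
exact: (path_le leq_trans (leqnSn o) (IH o.+1)).
Qed.

Lemma count_word_from o b v :
  count_mem v (word_from o b) = if o <= v then nth 0 b (v - o) else 0.
Proof.
elim: b o => [|x b IH] o /=; first by case: ifP; rewrite ?nth_nil.
rewrite count_cat count_nseq IH /=; case: (ltngtP o v) => [lt_ov|//|<-].
  by rewrite -(subnSK lt_ov).
by rewrite subnn /= mul1n addn0.
Qed.

Section TwoRowTableaux.
Variables N k : nat.

Definition tab := ({ffun 'I_N -> 'I_k} * {ffun 'I_N -> 'I_k})%type.

Definition mult (r : {ffun 'I_N -> 'I_k}) (v : 'I_k) : nat := #|[set j | r j == v]|.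

(* [is_tableau] of the definitions, with the row length and the alphabet as parameters. *)
Definition is_tab (a : seq nat) (t : tab) : bool :=
  [forall j1 : 'I_N, forall j2 : 'I_N,
     (j1 <= j2) ==> ((t.1 j1 <= t.1 j2) && (t.2 j1 <= t.2 j2))] &&
  [forall j : 'I_N, t.1 j < t.2 j] &&
  [forall i : 'I_k, mult t.1 i + mult t.2 i == nth 0 a i].

Definition tabs (a : seq nat) : {set tab} := [set t | is_tab a t].

Lemma is_tabP (a : seq nat) (t : tab) :
  reflect [/\ {homo t.1 : j1 j2 / j1 <= j2}, {homo t.2 : j1 j2 / j1 <= j2},
              forall j, t.1 j < t.2 j & forall i : 'I_k, mult t.1 i + mult t.2 i = nth 0 a i]
          (is_tab a t).
Proof.
apply: (iffP idP) => [|[homo1 homo2 col cont]].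
  case/andP => /andP [/forallP homo /forallP col /forallP cont]; split=> //.
  - by move=> j1 j2 le12; have /forallP/(_ j2)/implyP/(_ le12)/andP[] := homo j1.
  - by move=> j1 j2 le12; have /forallP/(_ j2)/implyP/(_ le12)/andP[] := homo j1.
  - by move=> i; apply/eqP.
apply/andP; split; first (apply/andP; split); last by apply/forallP=> i; rewrite cont.
  apply/forallP=> j1; apply/forallP=> j2; apply/implyP=> le12.
  by rewrite homo1 // homo2.
by apply/forallP.
Qed.

Lemma top_value_suffixE (r : {ffun 'I_N -> 'I_k}) (v : 'I_k) :
    {homo r : j1 j2 / j1 <= j2} -> (forall j, r j <= v) ->
  forall j, (r j == v) = (N - mult r v <= j).
Proof.
move=> r_homo r_le j; apply/idP/idP => [/eqP rj_v | le_j].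
  suff : N - j <= mult r v by lia.
  rewrite -[N in N - _]minnn -(card_ord_range N j N); apply: subset_leq_card; apply/subsetP.
  move=> j'; rewrite !inE => /andP [le_jj' _].
  by rewrite -val_eqE eqn_leq r_le -rj_v r_homo.
apply: contraLR le_j => rj_v; rewrite -ltnNge.
suff : mult r v <= N - j.+1 by have := ltn_ord j; lia.
rewrite -[N in N - _]minnn -(card_ord_range N j.+1 N); apply: subset_leq_card; apply/subsetP.
move=> j'; rewrite !inE ltn_ord andbT ltnNge => /eqP rj'_v.
by apply: contra rj_v => /r_homo; rewrite rj'_v -val_eqE eqn_leq r_le => ->.
Qed.

End TwoRowTableaux.

Lemma K_card_tabs a : K a = #|tabs (nS a - 1) (size a) a|.
Proof. by []. Qed.

Section RowsOfSeqs.
Variables N k : nat.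

Definition row_of_seq (s : seq nat) : {ffun 'I_N -> 'I_k.+1} :=
  [ffun j : 'I_N => inord (nth 0 s j)].

Lemma row_of_seqE s j : all (leq^~ k) s -> size s = N -> row_of_seq s j = nth 0 s j :> nat.
Proof. by move=> /all_nthP s_le size_s; rewrite ffunE inordK // ltnS s_le // size_s. Qed.

Lemma mult_row_of_seq s (v : 'I_k.+1) :
  all (leq^~ k) s -> size s = N -> mult (row_of_seq s) v = count_mem (val v) s.
Proof.
move=> s_le size_s; rewrite /mult -[s in RHS](mkseq_nth 0) /mkseq count_map size_s.
rewrite -(card_ord_pred N (fun j => nth 0 s j == v)); apply: eq_card => j.
by rewrite !inE -(inj_eq val_inj) /= row_of_seqE.
Qed.

Lemma is_tab_rows a s1 s2 :
    all (leq^~ k) s1 -> all (leq^~ k) s2 -> size s1 = N -> size s2 = N ->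
    sorted leq s1 -> sorted leq s2 -> (forall j, j < N -> nth 0 s1 j < nth 0 s2 j) ->
    (forall v, v <= k -> count_mem v s1 + count_mem v s2 = nth 0 a v) ->
  is_tab a (row_of_seq s1, row_of_seq s2).
Proof.
move=> le1 le2 size1 size2 sorted1 sorted2 col cont; apply/is_tabP; split => /=.
- move=> j1 j2 le12; rewrite !row_of_seqE //.
  by apply: (sorted_leq_nth leq_trans leqnn 0 sorted1); rewrite ?inE ?size1.
- move=> j1 j2 le12; rewrite !row_of_seqE //.
  by apply: (sorted_leq_nth leq_trans leqnn 0 sorted2); rewrite ?inE ?size2.
- by move=> j; rewrite !row_of_seqE // col.
- by move=> v; rewrite !mult_row_of_seq //; exact: cont (ltn_ord v).
Qed.

End RowsOfSeqs.

Lemma nth_cat_pair1 (b : seq nat) x y : nth 0 (b ++ [:: x; y]) (size b) = x.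
Proof. by rewrite nth_cat ltnn subnn. Qed.

Lemma nth_cat_pair2 (b : seq nat) x y : nth 0 (b ++ [:: x; y]) (size b).+1 = y.
Proof. by rewrite nth_cat ltnNge leqnSn subSnn. Qed.

Definition ord_penult n : 'I_n.+2 := Ordinal (leqnSn n.+1).

Lemma ord_cases_top2 n (v : 'I_n.+2) : [\/ v < n, v = ord_penult n | v = ord_max].
Proof.
have := ltn_ord v; case: (ltngtP v n) => [lt_vn | gt_vn | eq_vn] lt_v.
- by constructor 1.
- by constructor 3; apply: val_inj => /=; lia.
- by constructor 2; apply: val_inj.
Qed.

Section TopValues.
Variables (N m : nat) (a : seq nat) (t : tab N m.+2).
Hypothesis t_tab : is_tab a t.

Lemma mult_row1_max : mult t.1 ord_max = 0.
Proof.
have [_ _ col _] := is_tabP _ _ t_tab.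
apply: eq_card0 => j; rewrite !inE -(inj_eq val_inj) /=.
by have := col j; have := ltn_ord (t.2 j); lia.
Qed.

Lemma mult_row1_penult_le : mult t.1 (ord_penult m) <= nth 0 a m.
Proof. by have [_ _ _ cont] := is_tabP _ _ t_tab; rewrite -(cont (ord_penult m)) leq_addr. Qed.

Lemma row2_maxE (j : 'I_N) : (t.2 j == ord_max) = (N - nth 0 a m.+1 <= j).
Proof.
have [_ homo2 _ cont] := is_tabP _ _ t_tab.
have := cont ord_max; rewrite mult_row1_max => /= <-.
by apply: top_value_suffixE => // j'; rewrite -ltnS.
Qed.

Lemma row1_lt_penult (j : 'I_N) : j < N - nth 0 a m -> t.1 j < m.
Proof.
have [homo1 _ col _] := is_tabP _ _ t_tab.
have row1_le j' : t.1 j' <= ord_penult m.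
  by have := col j'; have := ltn_ord (t.2 j'); rewrite /=; lia.
have := top_value_suffixE homo1 row1_le j; have := mult_row1_penult_le.
rewrite -(inj_eq val_inj) /=; have := row1_le j; rewrite /=; lia.
Qed.

End TopValues.

Section Exchange.
Variables (N m : nat) (b : seq nat) (al be ga : nat).
Hypotheses (size_b : size b = m) (bega_le : be + ga <= N) (albe_le : al + be <= N)
  (al_le_ga : al <= ga).

Let L := N - be - al.

Definition lower_top (t : tab N m.+2) : tab N m.+2 :=
  (t.1, [ffun j => if (t.2 j == ord_max) && (j < L) then ord_penult m else t.2 j]).

Section OneTableau.
Variable t : tab N m.+2.
Hypothesis t_tab : is_tab (b ++ [:: al; be + ga]) t.

Lemma row2_max_suffix j : (t.2 j == ord_max) = (N - (be + ga) <= j).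
Proof. by rewrite (row2_maxE t_tab) -size_b nth_cat_pair2. Qed.

Lemma lower_top2E j :
  (lower_top t).2 j = if N - (be + ga) <= j < L then ord_penult m else t.2 j.
Proof. by rewrite ffunE row2_max_suffix. Qed.

Lemma mult_lower_top2_low (v : 'I_m.+2) : v < m -> mult (lower_top t).2 v = mult t.2 v.
Proof.
move=> v_lt; apply: eq_card => j; rewrite !inE lower_top2E.
case: ifP => // /andP [le_j _]; move: (le_j); rewrite -row2_max_suffix => /eqP ->.
by rewrite -!(inj_eq val_inj) /=; lia.
Qed.

Lemma mult_lower_top2_penult :
  mult (lower_top t).2 (ord_penult m) = mult t.2 (ord_penult m) + (ga - al).
Proof.
rewrite /mult; set D := [set j : 'I_N | N - (be + ga) <= j < L].
have -> : [set j | (lower_top t).2 j == ord_penult m] = [set j | t.2 j == ord_penult m] :|: D.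
  apply/setP => j; rewrite !inE lower_top2E; case: ifP => _; rewrite ?eqxx ?orbT ?orbF //.
rewrite cardsU (_ : _ :&: D = set0) ?cards0 ?subn0 ?card_ord_range; first lia.
apply/setP => j; rewrite !inE; apply/negP => /and3P [/eqP pen le_j _].
by move: le_j; rewrite -row2_max_suffix pen -(inj_eq val_inj) /= ltn_eqF.
Qed.

Lemma mult_lower_top2_max : mult (lower_top t).2 ord_max = be + al.
Proof.
rewrite /mult (_ : [set j | _] = [set j : 'I_N | L <= j < N]) ?card_ord_range; first lia.
apply/setP => j; rewrite !inE lower_top2E ltn_ord andbT.
case: ifP => [/andP [_ lt_j] | out_j]; first by rewrite -(inj_eq val_inj) /=; lia.
by rewrite row2_max_suffix; move: out_j; lia.
Qed.

Lemma lower_top_is_tab : is_tab (b ++ [:: ga; be + al]) (lower_top t).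
Proof.
have [homo1 homo2 col cont] := is_tabP _ _ t_tab.
apply/is_tabP; split => //=.
- move=> j1 j2 le12; rewrite !lower_top2E.
  have := homo2 _ _ le12; have := row2_max_suffix j1; have := row2_max_suffix j2.
  rewrite -!(inj_eq val_inj) /=; have := ltn_ord (t.2 j1); have := ltn_ord (t.2 j2).
  by case: ifP; case: ifP => /=; lia.
- move=> j; rewrite lower_top2E; case: ifP => [/andP [_ lt_jL] | _]; last exact: col.
  by apply: (row1_lt_penult t_tab); rewrite -size_b nth_cat_pair1; lia.
- move=> v; case: (ord_cases_top2 v) => [v_lt | -> | ->].
  + by rewrite mult_lower_top2_low // cont !nth_cat size_b v_lt.
  + rewrite mult_lower_top2_penult addnA cont /= -size_b !nth_cat_pair1; lia.
  + by rewrite mult_lower_top2_max (mult_row1_max t_tab) /= -size_b nth_cat_pair2.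
Qed.

End OneTableau.

Lemma lower_top_inj : {in tabs N m.+2 (b ++ [:: al; be + ga]) &, injective lower_top}.
Proof.
move=> [t1 t2] [s1 s2]; rewrite !inE => t_tab s_tab eq_low.
case: eq_low => -> /ffunP eq2; congr pair; apply/ffunP => j.
move: (eq2 j); rewrite (lower_top2E t_tab) (lower_top2E s_tab).
case: ifP => // /andP [le_j _] _.
by move: (row2_max_suffix t_tab j) (row2_max_suffix s_tab j); rewrite le_j => /eqP -> /eqP ->.
Qed.

Section Witness.
Hypotheses (sum_N : sumn b + al + be + ga = N + N) (be_gt0 : 0 < be) (al_lt_ga : al < ga)
  (b_le : forall i, i < m -> nth 0 b i + ga <= N).

Let W := word_from 0 b.
Let P := N - al.+1.
Let Q := sumn b - P.

Definition witness_row1 := take P W ++ nseq al.+1 m.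
Definition witness_row2 := (drop P W ++ nseq (L - Q) m) ++ nseq (be + al) m.+1.
Definition witness : tab N m.+2 :=
  (row_of_seq N m.+1 witness_row1, row_of_seq N m.+1 witness_row2).

Let size_W : size W = sumn b. Proof. exact: size_word_from. Qed.
Let sorted_W : sorted leq W. Proof. exact: path_sorted (path_word_from 0 b). Qed.
Let count_W v : count_mem v W = nth 0 b v.
Proof. by rewrite count_word_from subn0. Qed.
Let W_lt : all (fun v => v < m) W.
Proof. by rewrite -size_b; apply: sub_all (word_from_bounds 0 b) => v /andP []. Qed.
Let nth_W_lt j : j < sumn b -> nth 0 W j < m.
Proof. by move=> lt_j; apply: (all_nthP 0 W_lt); rewrite size_W. Qed.

Let P_le : P <= sumn b. Proof. lia. Qed.
Let Q_le : Q <= L. Proof. lia. Qed.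
Let L_le : L <= P. Proof. lia. Qed.

Let size_take_W : size (take P W) = P. Proof. by rewrite size_takel ?size_W. Qed.

Lemma size_witness_row1 : size witness_row1 = N.
Proof. rewrite size_cat size_take_W size_nseq; lia. Qed.

Lemma size_witness_row2 : size witness_row2 = N.
Proof. rewrite !size_cat !size_nseq size_drop size_W; lia. Qed.

Lemma nth_witness_row1 j :
  nth 0 witness_row1 j = if j < P then nth 0 W j else if j < N then m else 0.
Proof.
rewrite nth_cat_nseq size_take_W (_ : P + al.+1 = N); last lia.
by case: ifP => // lt_j; rewrite nth_take.
Qed.

Lemma nth_witness_row2 j :
  nth 0 witness_row2 j =
  if j < Q then nth 0 W (P + j) else if j < L then m else if j < N then m.+1 else 0.
Proof.
have size_pre : size (drop P W ++ nseq (L - Q) m) = L.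
  by rewrite size_cat size_drop size_nseq size_W; lia.
rewrite nth_cat_nseq size_pre (_ : L + (be + al) = N); last lia.
rewrite nth_cat_nseq size_drop size_W nth_drop -/Q (subnKC Q_le).
by case: (ltnP j L) => [// | le_Lj]; rewrite [j < Q]ltnNge (leq_trans Q_le le_Lj).
Qed.

Lemma witness_row1_le : all (leq^~ m.+1) witness_row1.
Proof.
apply/(all_nthP 0) => j; rewrite size_witness_row1 nth_witness_row1 => lt_j; rewrite lt_j.
by have := @nth_W_lt j; case: ifP; lia.
Qed.

Lemma witness_row2_le : all (leq^~ m.+1) witness_row2.
Proof.
apply/(all_nthP 0) => j; rewrite size_witness_row2 nth_witness_row2 => lt_j.
by have := @nth_W_lt (P + j); rewrite lt_j; case: ifP => [lt_jQ | _]; [lia | case: ifP].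
Qed.

Lemma witness_is_tab : witness \in tabs N m.+2 (b ++ [:: ga; be + al]).
Proof.
rewrite inE; apply: is_tab_rows.
- exact: witness_row1_le.
- exact: witness_row2_le.
- exact: size_witness_row1.
- exact: size_witness_row2.
- apply: sorted_cat_nseq; first exact: take_sorted.
  by apply/allP => x /mem_take /(allP W_lt) /ltnW.
- apply: sorted_cat_nseq; first apply: sorted_cat_nseq; first exact: drop_sorted.
  + by apply/allP => x /mem_drop /(allP W_lt) /ltnW.
  + apply/allP => x; rewrite mem_cat => /orP [/mem_drop /(allP W_lt) | /nseqP [-> _]]; lia.
- move=> j lt_j; rewrite nth_witness_row1 nth_witness_row2 lt_j.
  have gap : j < Q -> nth 0 W j < nth 0 W (P + j).
    move=> lt_jQ; rewrite addnC; apply: sorted_gap => //; first by rewrite size_W; lia.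
    move=> v; rewrite count_W; case: (ltnP v m) => [/b_le | le_mv]; first lia.
    by rewrite nth_default ?size_b.
  by have := @nth_W_lt j; do !case: ifP => ?; lia.
- move=> v le_v.
  have : count_mem v (take P W) + count_mem v (drop P W) = nth 0 b v.
    by rewrite -count_cat cat_take_drop count_W.
  rewrite !count_cat !count_nseq /=; case: (ltngtP v m) => [lt_vm | gt_vm | eq_vm].
  + by rewrite nth_cat size_b lt_vm (gtn_eqF (leqW lt_vm)); lia.
  + have -> : v = (size b).+1 by lia.
    by rewrite nth_cat_pair2 nth_default ?size_b // eqxx !mul0n mul1n; lia.
  + have := nth_cat_pair1 b ga (be + al); rewrite eq_vm size_b => ->.
    by rewrite nth_default ?size_b // gtn_eqF //; lia.
Qed.

Lemma mult_witness_row1 : mult witness.1 (ord_penult m) = al.+1.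
Proof.
rewrite mult_row_of_seq ?size_witness_row1 ?witness_row1_le //=.
rewrite count_cat count_nseq /= eqxx mul1n.
by rewrite (count_memPn _) //; apply/negP => /mem_take /(allP W_lt); rewrite ltnn.
Qed.

Lemma card_tabs_exchange :
  #|tabs N m.+2 (b ++ [:: al; be + ga])| < #|tabs N m.+2 (b ++ [:: ga; be + al])|.
Proof.
rewrite -(card_in_imset lower_top_inj); apply: proper_card; apply/properP; split.
  apply/subsetP => u /imsetP [t]; rewrite inE => t_tab ->; rewrite inE; exact: lower_top_is_tab.
exists witness; first exact: witness_is_tab.
apply/imsetP => -[t]; rewrite inE => t_tab eq_witness.
have := mult_row1_penult_le t_tab; have := nth_cat_pair1 b al (be + ga).
by rewrite size_b => ->; rewrite -[t.1]/(lower_top t).1 -eq_witness mult_witness_row1 ltnn.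
Qed.

End Witness.
End Exchange.

Lemma reduced_pair_le a i j : reduced a -> i < j -> j < size a ->
  nth 0 a i + nth 0 a j <= nS a - 1.
Proof.
case/andP => _ /forallP red lt_ij lt_j; have lt_i := ltn_trans lt_ij lt_j.
by have /forallP /(_ (Ordinal lt_j)) /implyP := red (Ordinal lt_i); apply.
Qed.

Lemma nS_double a : ~~ odd (sumn a) -> (nS a - 1).*2 = sumn a.
Proof. by move=> even_a; have := odd_double_half (sumn a); rewrite /nS (negbTE even_a); lia. Qed.

Theorem lemma2p2 (b : seq nat) (alpha beta gamma : nat) :
  reduced (b ++ [:: alpha; beta; gamma]) ->
  alpha <= beta -> beta <= gamma -> alpha < gamma ->
  K (b ++ [:: alpha; beta + gamma]) < K (b ++ [:: gamma; beta + alpha]).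
Proof.
move=> red _ _ lt_ag; set a := b ++ [:: alpha; beta; gamma] in red.
have /andP [/andP [/andP [/allP pos even_a] _] _] := red.
have beta_gt0 : 0 < beta by apply: pos; rewrite mem_cat !inE eqxx /= !orbT.
have pair_le i j : i < j -> j < (size b).+3 -> nth 0 a i + nth 0 a j <= nS a - 1.
  by rewrite -addn3 -(size_cat b [:: alpha; beta; gamma]); apply: reduced_pair_le.
have nth_a3 i : nth 0 a (size b + i) = nth 0 [:: alpha; beta; gamma] i.
  by rewrite nth_cat ltnNge leq_addr addKn.
have sum_a : sumn a = sumn b + alpha + beta + gamma by rewrite sumn_cat /=; lia.
have nS_eq s : sumn s = sumn a -> nS s = nS a by rewrite /nS => ->.
rewrite !K_card_tabs !nS_eq ?sumn_cat /= ?sum_a; try lia.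
rewrite !size_cat /= !addn2; apply: card_tabs_exchange => //.
- by have := pair_le (size b + 1) (size b + 2); rewrite !nth_a3; apply; lia.
- by have := pair_le (size b + 0) (size b + 1); rewrite !nth_a3; apply; lia.
- exact: ltnW.
- by have := nS_double even_a; lia.
- move=> i lt_i; have := pair_le i (size b + 2).
  by rewrite nth_a3 nth_cat lt_i; apply; lia.
Qed.
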